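(* If $\Gamma\vdash M$ is derivable in $\ell\Lambda_\infty$ and $M\to N$, then $\Gamma\vdash N$ is derivable in $\ell\Lambda_\infty$.
   Context: Preterms are possibly infinite trees generated (coinductively) by $M,N ::= x \mid MN \mid \lambda x.M \mid \lambda^{\downarrow}x.M \mid \lambda^{\uparrow}x.M \mid \downarrow M \mid \uparrow M$ ($\downarrow M$ an inductive box, $\uparrow M$ a coinductive box); $M[N/x]$ is capture-avoiding substitution (coinductively defined). A pattern is $x$, $\downarrow x$ or $\uparrow x$; an environment is a finite set of patterns, each variable in at most one pattern; a linear environment is a set of variables; $\downarrow\Theta=\{\downarrow y: y\in\Theta\}$, $\uparrow\Theta=\{\uparrow y: y\in\Theta\}$; commas denote disjoint unions. The system $\ell\Lambda_\infty$ has rules (with $\Theta,\Xi$ linear): (vl) $\downarrow\Theta,\uparrow\Xi,x\vdash x$; (vi) $\downarrow\Theta,\uparrow\Xi,\downarrow x\vdash x$; (vc) $\downarrow\Theta,\uparrow\Xi,\uparrow x\vdash x$; (a) from $\Gamma,\downarrow\Theta,\uparrow\Xi\vdash M$ and $\Delta,\downarrow\Theta,\uparrow\Xi\vdash N$ infer $\Gamma,\Delta,\downarrow\Theta,\uparrow\Xi\vdash MN$; (ll) from $\Gamma,x\vdash M$ infer $\Gamma\vdash\lambda x.M$; (li) from $\Gamma,\downarrow x\vdash M$ infer $\Gamma\vdash\lambda^\downarrow x.M$; (lc) from $\Gamma,\uparrow x\vdash M$ infer $\Gamma\vdash \lambda^\uparrow x.M$; (mi) from $\downarrow\Theta,\uparrow\Xi\vdash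 M$ infer $\downarrow\Theta,\uparrow\Xi\vdash \downarrow M$; (mc) from $\downarrow\Theta,\uparrow\Xi\vdash M$ infer $\downarrow\Theta,\uparrow\Xi\vdash\uparrow M$. (mc) is coinductive, the others inductive: derivable judgments are roots of possibly infinite derivation trees in which every infinite branch contains infinitely many (mc) instances. Basic reduction $\mapsto$: $(\lambda x.M)N\mapsto M[N/x]$, $(\lambda^\downarrow x.M)(\downarrow N)\mapsto M[N/x]$, $(\lambda^\uparrow x.M)(\uparrow N)\mapsto M[N/x]$. A context $C$ is a preterm with a single hole occurring at a finite position; $M\to N$ iff $M=C[L]$, $N=C[P]$ for some context $C$ and $L\mapsto P$. *)

From Stdlib Require Import Arith.

CoInductive term : Type :=
| Var  : nat -> term
| App  : term -> term -> term
| Lam  : term -> term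
| LamI : term -> term          (* lambda^{down} x. M   *)
| LamC : term -> term          (* lambda^{up} x. M     *)
| BoxI : term -> term          (* inductive box   (down M) *)
| BoxC : term -> term.         (* coinductive box (up M)   *)

(** Equality of infinite trees = bisimilarity. *)
CoInductive bisim : term -> term -> Prop :=
| bisim_Var  : forall x, bisim (Var x) (Var x)
| bisim_App  : forall M M' N N', bisim M M' -> bisim N N' -> bisim (App M N) (App M' N')
| bisim_Lam  : forall M M', bisim M M' -> bisim (Lam M) (Lam M')
| bisim_LamI : forall M M', bisim M M' -> bisim (LamI M) (LamI M')
| bisim_LamC : forall M M', bisim M M' -> bisim (LamC M) (LamC M')
| bisim_BoxI : forall M M', bisim M M' -> bisim (BoxI M) (BoxI M')
| bisim_BoxC : forall M M', bisim M M' -> bisim (BoxC M) (BoxC M').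

CoFixpoint rename (r : nat -> nat) (t : term) : term :=
  match t with
  | Var x => Var (r x)
  | App M N => App (rename r M) (rename r N)
  | Lam M => Lam (rename (fun n => match n with 0 => 0 | S k => S (r k) end) M)
  | LamI M => LamI (rename (fun n => match n with 0 => 0 | S k => S (r k) end) M)
  | LamC M => LamC (rename (fun n => match n with 0 => 0 | S k => S (r k) end) M)
  | BoxI M => BoxI (rename r M)
  | BoxC M => BoxC (rename r M)
  end.

Definition up (s : nat -> term) : nat -> term :=
  fun n => match n with 0 => Var 0 | S k => rename S (s k) end.

CoFixpoint subst (s : nat -> term) (t : term) : term :=
  match t with
  | Var x => s x
  | App M N => App (subst s M) (subst s N)
  | Lam M => Lam (subst (up s) M)
  | LamI M => LamI (subst (up s) M)
  | LamC M => LamC (subst (up s) M)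
  | BoxI M => BoxI (subst s M)
  | BoxC M => BoxC (subst s M)
  end.

Definition subst0 (N : term) (M : term) : term :=
  subst (fun n => match n with 0 => N | S k => Var k end) M.

Inductive basic_red : term -> term -> Prop :=
| br_lin : forall M N, basic_red (App (Lam M) N) (subst0 N M)
| br_ind : forall M N, basic_red (App (LamI M) (BoxI N)) (subst0 N M)
| br_coi : forall M N, basic_red (App (LamC M) (BoxC N)) (subst0 N M).

(** Closure under contexts with the hole at a finite position. *)
Inductive ctx_red : term -> term -> Prop :=
| cr_base : forall M N, basic_red M N -> ctx_red M N
| cr_appl : forall M M' N, ctx_red M M' -> ctx_red (App M N) (App M' N)
| cr_appr : forall M N N', ctx_red N N' -> ctx_red (App M N) (App M N')
| cr_lam  : forall M M', ctx_red M M' -> ctx_red (Lam M) (Lam M')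
| cr_lamI : forall M M', ctx_red M M' -> ctx_red (LamI M) (LamI M')
| cr_lamC : forall M M', ctx_red M M' -> ctx_red (LamC M) (LamC M')
| cr_boxI : forall M M', ctx_red M M' -> ctx_red (BoxI M) (BoxI M')
| cr_boxC : forall M M', ctx_red M M' -> ctx_red (BoxC M) (BoxC M').

Definition red (M N : term) : Prop := exists N', ctx_red M N' /\ bisim N' N.

(** Environments: de Bruijn index |-> pattern kind (x, down x, up x) or absent. *)
Inductive kind : Type := KL | KI | KC.

Definition env := nat -> option kind.

Definition finite_env (G : env) : Prop := exists n, forall k, n <= k -> G k = None.

(** the linear part of G is empty, i.e. G = down Theta, up Xi *)
Definition no_linear (G : env) : Prop := forall y, G y <> Some KL.

Definition ext (k : kind) (G : env) : env :=
  fun n => match n with 0 => Some k | S m => G m end.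

(** G = G1', G2', down Theta, up Xi  where G1 = G1', downTheta, upXi and
    G2 = G2', downTheta, upXi (disjoint unions). *)
Definition env_split (G G1 G2 : env) : Prop :=
  forall y,
    match G y with
    | None => G1 y = None /\ G2 y = None
    | Some KL => (G1 y = Some KL /\ G2 y = None) \/ (G1 y = None /\ G2 y = Some KL)
    | Some k => (G1 y = Some k /\ G2 y = Some k)
                \/ (G1 y = Some k /\ G2 y = None) \/ (G1 y = None /\ G2 y = Some k)
    end.

(** One layer: inductive rules, with the premise of (mc) referring to X. *)
Inductive derivF (X : env -> term -> Prop) : env -> term -> Prop :=
| d_vl : forall G x, G x = Some KL -> (forall y, y <> x -> G y <> Some KL) ->
         derivF X G (Var x)
| d_vi : forall G x, G x = Some KI -> no_linear G -> derivF X G (Var x)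
| d_vc : forall G x, G x = Some KC -> no_linear G -> derivF X G (Var x)
| d_a  : forall G G1 G2 M N, env_split G G1 G2 ->
         derivF X G1 M -> derivF X G2 N -> derivF X G (App M N)
| d_ll : forall G M, derivF X (ext KL G) M -> derivF X G (Lam M)
| d_li : forall G M, derivF X (ext KI G) M -> derivF X G (LamI M)
| d_lc : forall G M, derivF X (ext KC G) M -> derivF X G (LamC M)
| d_mi : forall G M, no_linear G -> derivF X G M -> derivF X G (BoxI M)
| d_mc : forall G M, no_linear G -> X G M -> derivF X G (BoxC M).

(** Derivability: greatest fixed point (in X) of the least fixed point derivF X.
    Equivalently: roots of possibly infinite derivation trees in which every
    infinite branch contains infinitely many (mc) instances. *)
Definition derivable (G : env) (M : term) : Prop :=
  exists X : env -> term -> Prop,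
    (forall G' M', X G' M' -> derivF X G' M') /\ X G M.

From Stdlib Require Import Arith ClassicalEpsilon.

(* Subject reduction reduces to a substitution lemma: if [G |- M] and each
   variable [y] of [G] is replaced by a term [s y] derivable in an environment
   [F y], where the linear parts of the [F y] for linear [y] partition the
   linear part of [D] and the [F y] for non-linear [y] have no linear part,
   then [D |- M[s]].  This lemma, weakening along injective renamings and
   invariance under bisimilarity are each proved by coinduction up to
   derivability: one layer [derivF] is handled by induction on the inductive
   rules, and only the premise of (mc), guarded by a coinductive box, goes back
   to the coinduction hypothesis. *)

Lemma derivF_mono (X Y : env -> term -> Prop) :
  (forall G t, X G t -> Y G t) -> forall G t, derivF X G t -> derivF Y G t.
Proof.
  intros HXY G t H; induction H; solve [econstructor; eauto].
Qed.

Lemma derivable_unfold G t : derivable G t -> derivF derivable G t.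
Proof.
  intros [X [HX Ht]]. apply (derivF_mono X); auto.
  intros G' t' H'; exists X; auto.
Qed.

Lemma derivF_or_derivable (X : env -> term -> Prop) G t :
  derivable G t -> derivF (fun G t => X G t \/ derivable G t) G t.
Proof.
  intros H. apply (derivF_mono derivable); auto using derivable_unfold.
Qed.

Lemma derivable_coind (X : env -> term -> Prop) :
  (forall G t, X G t -> derivF (fun G t => X G t \/ derivable G t) G t) ->
  forall G t, X G t -> derivable G t.
Proof.
  intros HX G t H. exists (fun G t => X G t \/ derivable G t). split; auto.
  intros G' t' [H'|H']; auto using derivF_or_derivable.
Qed.

Lemma derivable_fold G t : derivF derivable G t -> derivable G t.
Proof.
  apply (derivable_coind (derivF derivable)); auto.
  intros G' t' H'. apply (derivF_mono derivable); auto.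
Qed.

Lemma derivable_bisim G t t' : derivable G t -> bisim t t' -> derivable G t'.
Proof.
  intros Ht Hb.
  apply (derivable_coind (fun G t' => exists t, derivable G t /\ bisim t t')); eauto.
  clear. intros G t' [t [Ht Hb]].
  apply (derivF_mono (fun G t' => exists t, derivable G t /\ bisim t t')); auto.
  apply derivable_unfold in Ht. revert t' Hb.
  induction Ht; intros t' Hb; inversion Hb; subst; solve [econstructor; eauto].
Qed.

Definition frob (t : term) : term :=
  match t with
  | Var x => Var x | App a b => App a b | Lam a => Lam a | LamI a => LamI a
  | LamC a => LamC a | BoxI a => BoxI a | BoxC a => BoxC a
  end.

Lemma term_unfold t : t = frob t.
Proof. destruct t; reflexivity. Qed.

Lemma subst_Var s x : subst s (Var x) = s x.
Proof. rewrite (term_unfold (subst s (Var x))); simpl. apply eq_sym, term_unfold. Qed.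

Ltac unfold_cofix f :=
  match goal with |- context [f ?a ?t] => rewrite (term_unfold (f a t)); simpl end.

Lemma env_split_incl_l G G1 G2 :
  env_split G G1 G2 -> forall z k, G1 z = Some k -> G z = Some k.
Proof.
  intros Hs z k H; specialize (Hs z); destruct (G z) as [[| |]|]; destruct k;
    intuition congruence.
Qed.

Lemma env_split_incl_r G G1 G2 :
  env_split G G1 G2 -> forall z k, G2 z = Some k -> G z = Some k.
Proof.
  intros Hs z k H; specialize (Hs z); destruct (G z) as [[| |]|]; destruct k;
    intuition congruence.
Qed.

Lemma env_split_linear_excl G G1 G2 z :
  env_split G G1 G2 -> G1 z = Some KL -> G2 z = Some KL -> False.
Proof.
  intros Hs H1 H2; specialize (Hs z); destruct (G z) as [[| |]|]; intuition congruence.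
Qed.

Lemma env_split_linear G G1 G2 z :
  env_split G G1 G2 -> G z = Some KL -> G1 z = Some KL \/ G2 z = Some KL.
Proof. intros Hs H; specialize (Hs z); rewrite H in Hs; intuition. Qed.

Definition restrict_linear (D : env) (P : nat -> Prop) : env :=
  fun z => match D z with
           | Some KL => if excluded_middle_informative (P z) then Some KL else None
           | o => o
           end.

Lemma env_split_restrict_linear D P :
  env_split D (restrict_linear D P) (restrict_linear D (fun z => ~ P z)).
Proof.
  intros z; unfold restrict_linear; destruct (D z) as [[| |]|]; auto.
  destruct (excluded_middle_informative (P z)),
           (excluded_middle_informative (~ P z)); tauto.
Qed.

Lemma restrict_linear_KL D P z :
  restrict_linear D P z = Some KL <-> D z = Some KL /\ P z.
Proof.
  unfold restrict_linear; destruct (D z) as [[| |]|];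
    try (split; [discriminate | intros [? _]; discriminate]).
  destruct (excluded_middle_informative (P z)); intuition discriminate.
Qed.

Lemma restrict_linear_nonlinear D P z k :
  D z = Some k -> k <> KL -> restrict_linear D P z = Some k.
Proof. intros HD Hk; unfold restrict_linear; rewrite HD; destruct k; congruence. Qed.

Definition lift (r : nat -> nat) : nat -> nat :=
  fun n => match n with 0 => 0 | S k => S (r k) end.

(* Injective renaming combined with weakening by non-linear variables. *)
Record embeds (r : nat -> nat) (E E' : env) : Prop := {
  embeds_inj : forall a b, r a = r b -> a = b;
  embeds_some : forall n k, E n = Some k -> E' (r n) = Some k;
  embeds_linear : forall m, E' m = Some KL -> exists n, r n = m /\ E n = Some KL
}.

Lemma embeds_no_linear r E E' : embeds r E E' -> no_linear E -> no_linear E'.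
Proof.
  intros HE Hn m Hm. destruct (embeds_linear _ _ _ HE m Hm) as [n [_ Hn']].
  exact (Hn n Hn').
Qed.

Lemma embeds_ext k r E E' : embeds r E E' -> embeds (lift r) (ext k E) (ext k E').
Proof.
  intros [Hinj Hsome Hlin]; split.
  - intros [|a] [|b] H; simpl in H; try discriminate; auto.
  - intros [|n]; simpl; auto.
  - intros [|m]; simpl; intros Hm.
    + exists 0; auto.
    + destruct (Hlin m Hm) as [n [<- Hn]]. exists (S n); auto.
Qed.

Lemma embeds_split r E E1 E2 E' :
  embeds r E E' -> env_split E E1 E2 ->
  let P1 := fun m => exists n, r n = m /\ E1 n = Some KL in
  embeds r E1 (restrict_linear E' P1) /\
  embeds r E2 (restrict_linear E' (fun m => ~ P1 m)).
Proof.
  intros [Hinj Hsome Hlin] Hs P1; split; split; auto.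
  - intros n k Hn. assert (HE := Hsome n k (env_split_incl_l _ _ _ Hs _ _ Hn)).
    destruct k; try (apply restrict_linear_nonlinear; congruence).
    apply restrict_linear_KL; split; auto. exists n; auto.
  - intros m Hm. apply restrict_linear_KL in Hm. apply Hm.
  - intros n k Hn. assert (HE := Hsome n k (env_split_incl_r _ _ _ Hs _ _ Hn)).
    destruct k; try (apply restrict_linear_nonlinear; congruence).
    apply restrict_linear_KL; split; auto.
    intros [n' [Hn' H1]]. apply Hinj in Hn'; subst.
    eapply env_split_linear_excl; eauto.
  - intros m Hm. apply restrict_linear_KL in Hm. destruct Hm as [Hm HP].
    destruct (Hlin m Hm) as [n [<- Hn]]. exists n; split; auto.
    destruct (env_split_linear _ _ _ _ Hs Hn) as [H1|H2]; auto.
    exfalso; apply HP; exists n; auto.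
Qed.

Lemma derivable_rename r E E' t :
  embeds r E E' -> derivable E t -> derivable E' (rename r t).
Proof.
  intros HE Ht.
  set (X := fun E' t' => exists r E t, embeds r E E' /\ derivable E t /\ t' = rename r t).
  apply (derivable_coind X); [|exists r, E, t; auto].
  clear. intros E' t' [r [E [t [HE [Ht ->]]]]].
  apply (derivF_mono X); auto.
  apply derivable_unfold in Ht. revert r E' HE.
  induction Ht; intros r E' HE; unfold_cofix rename.
  - apply d_vl; [eapply embeds_some; eauto|].
    intros y Hy HE'. destruct (embeds_linear _ _ _ HE y HE') as [n [<- Hn]].
    destruct (Nat.eq_dec n x) as [->|Hnx]; [tauto|]. exact (H0 n Hnx Hn).
  - apply d_vi; [eapply embeds_some | eapply embeds_no_linear]; eauto.
  - apply d_vc; [eapply embeds_some | eapply embeds_no_linear]; eauto.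
  - destruct (embeds_split _ _ _ _ _ HE H) as [HE1 HE2].
    eapply d_a; [apply env_split_restrict_linear | apply IHHt1 | apply IHHt2]; eauto.
  - apply d_ll, IHHt, (embeds_ext KL r G E' HE).
  - apply d_li, IHHt, (embeds_ext KI r G E' HE).
  - apply d_lc, IHHt, (embeds_ext KC r G E' HE).
  - apply d_mi; [eapply embeds_no_linear|]; eauto.
  - apply d_mc; [eapply embeds_no_linear|]; eauto. exists r, G, M; auto.
Qed.

Lemma bisim_rename_id r t : (forall n, r n = n) -> bisim (rename r t) t.
Proof.
  revert r t; cofix CIH; intros r t Hr.
  destruct t; unfold_cofix rename; [rewrite Hr; constructor | constructor; apply CIH ..];
    try (intros [|n]; simpl); auto.
Qed.

Lemma derivable_weaken E D t :
  (forall z k, E z = Some k -> D z = Some k) ->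
  (forall z, D z = Some KL -> E z = Some KL) ->
  derivable E t -> derivable D t.
Proof.
  intros Hincl Hlin Ht. apply (derivable_bisim _ (rename (fun n => n) t));
    [|apply bisim_rename_id; auto].
  apply (derivable_rename _ E); auto. split; eauto.
Qed.

Definition shift (E : env) : env := fun n => match n with 0 => None | S m => E m end.

Lemma embeds_shift E : embeds S E (shift E).
Proof.
  split; auto.
  intros [|m] Hm; simpl in Hm; [discriminate|]. exists m; auto.
Qed.

Definition single (x : nat) (o : option kind) : env :=
  fun z => if Nat.eq_dec z x then o else None.

Lemma single_some x o z k : single x o z = Some k -> z = x /\ o = Some k.
Proof. unfold single; destruct (Nat.eq_dec z x); [auto | discriminate]. Qed.

Lemma single_at x o : single x o x = o.
Proof. unfold single; destruct (Nat.eq_dec x x); congruence. Qed.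

Lemma derivable_single x k : derivable (single x (Some k)) (Var x).
Proof.
  apply derivable_fold.
  assert (Hnl : forall y, y <> x -> single x (Some k) y <> Some KL).
  { intros y Hy H; apply single_some in H; tauto. }
  assert (Hx := single_at x (Some k)).
  destruct k; [apply d_vl | apply d_vi | apply d_vc]; auto;
    intros y; destruct (Nat.eq_dec y x) as [->|]; auto; congruence.
Qed.

Record subst_typed (D : env) (s : nat -> term) (G : env) (F : nat -> env) : Prop := {
  st_derivable : forall y k, G y = Some k -> derivable (F y) (s y);
  st_incl : forall y k z k', G y = Some k -> F y z = Some k' -> D z = Some k';
  st_nonlinear : forall y k, G y = Some k -> k <> KL -> no_linear (F y);
  st_linear : forall z, D z = Some KL -> exists y, G y = Some KL /\ F y z = Some KL;
  st_linear_uniq : forall y y' z, G y = Some KL -> G y' = Some KL ->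
    F y z = Some KL -> F y' z = Some KL -> y = y'
}.

Section SubstTyped.

Variables (D : env) (s : nat -> term) (G : env) (F : nat -> env).
Hypothesis HS : subst_typed D s G F.

Lemma subst_typed_linear_kind y k z : G y = Some k -> F y z = Some KL -> k = KL.
Proof.
  intros Hy Hz. destruct k; auto;
    exfalso; eapply (st_nonlinear _ _ _ _ HS); eauto; discriminate.
Qed.

Lemma subst_typed_no_linear : no_linear G -> no_linear D.
Proof.
  intros Hn z Hz. destruct (st_linear _ _ _ _ HS z Hz) as [y [Hy _]]. exact (Hn y Hy).
Qed.

Lemma subst_typed_var x k :
  G x = Some k -> (forall y, y <> x -> G y <> Some KL) -> derivable D (s x).
Proof.
  intros Hx Hlin. apply (derivable_weaken (F x)).
  - intros z k' Hz. eapply st_incl; eauto.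
  - intros z Hz. destruct (st_linear _ _ _ _ HS z Hz) as [y [Hy Hyz]].
    destruct (Nat.eq_dec y x) as [->|Hyx]; auto. exfalso; exact (Hlin y Hyx Hy).
  - eapply st_derivable; eauto.
Qed.

Lemma subst_typed_split G1 G2 :
  env_split G G1 G2 ->
  let P1 := fun z => exists y, G1 y = Some KL /\ F y z = Some KL in
  subst_typed (restrict_linear D P1) s G1 F /\
  subst_typed (restrict_linear D (fun z => ~ P1 z)) s G2 F.
Proof.
  intros Hs P1. pose proof HS as [Hder Hincl Hnl Hlin Huniq].
  pose proof (env_split_incl_l _ _ _ Hs) as HG1.
  pose proof (env_split_incl_r _ _ _ Hs) as HG2.
  split; split; eauto.
  - intros y k z k' Hy Hz. assert (HD : D z = Some k') by eauto.
    destruct k'; try (apply restrict_linear_nonlinear; congruence).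
    apply restrict_linear_KL; split; auto. exists y; split; auto.
    rewrite <- (subst_typed_linear_kind y k z); auto.
  - intros z Hz. apply restrict_linear_KL in Hz. apply Hz.
  - intros y k z k' Hy Hz. assert (HD : D z = Some k') by eauto.
    destruct k'; try (apply restrict_linear_nonlinear; congruence).
    apply restrict_linear_KL; split; auto.
    assert (k = KL) as -> by (eapply subst_typed_linear_kind; eauto).
    intros [y' [Hy' Hz']]. assert (y' = y) as -> by eauto.
    eapply env_split_linear_excl; eauto.
  - intros z Hz. apply restrict_linear_KL in Hz. destruct Hz as [Hz HP].
    destruct (Hlin z Hz) as [y [Hy Hyz]]. exists y; split; auto.
    destruct (env_split_linear _ _ _ _ Hs Hy) as [H1|H2]; auto.
    exfalso; apply HP; exists y; auto.
Qed.

Lemma subst_typed_up k :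
  subst_typed (ext k D) (up s) (ext k G)
    (fun y => match y with 0 => single 0 (Some k) | S y' => shift (F y') end).
Proof.
  pose proof HS as [Hder Hincl Hnl Hlin Huniq]. split.
  - intros [|y] k0 Hy; simpl in *.
    + apply derivable_single.
    + eapply derivable_rename; eauto using embeds_shift.
  - intros [|y] k0 z k' Hy Hz; simpl in *.
    + apply single_some in Hz as [-> Hk]. simpl; congruence.
    + destruct z as [|z]; simpl in *; [discriminate | eauto].
  - intros [|y] k0 Hy Hk z Hz; simpl in *.
    + apply single_some in Hz as [_ Hz]. congruence.
    + destruct z as [|z]; simpl in *; [discriminate | exact (Hnl y k0 Hy Hk z Hz)].
  - intros [|z] Hz; simpl in *.
    + exists 0; rewrite single_at; auto.
    + destruct (Hlin z Hz) as [y Hy]. exists (S y); auto.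
  - intros [|y] [|y'] z Hy Hy' Hz Hz'; simpl in *; auto.
    + apply single_some in Hz as [-> _]. discriminate.
    + apply single_some in Hz' as [-> _]. discriminate.
    + destruct z as [|z]; simpl in *; [discriminate | f_equal; eauto].
Qed.

End SubstTyped.

Lemma derivable_subst G D s F t :
  subst_typed D s G F -> derivable G t -> derivable D (subst s t).
Proof.
  intros HS Ht.
  set (X := fun D t' => exists G s F t,
              subst_typed D s G F /\ derivable G t /\ t' = subst s t).
  apply (derivable_coind X); [|exists G, s, F, t; auto].
  clear. intros D t' [G [s [F [t [HS [Ht ->]]]]]].
  apply derivable_unfold in Ht. revert D s F HS.
  induction Ht; intros D s F HS.
  1-3: rewrite subst_Var; apply derivF_or_derivable;
       eapply subst_typed_var; eauto; intros y _; apply H0.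
  all: unfold_cofix subst.
  - destruct (subst_typed_split _ _ _ _ HS _ _ H) as [HS1 HS2].
    eapply d_a; [apply env_split_restrict_linear | eapply IHHt1 | eapply IHHt2]; eauto.
  - apply d_ll; eapply IHHt, subst_typed_up; eauto.
  - apply d_li; eapply IHHt, subst_typed_up; eauto.
  - apply d_lc; eapply IHHt, subst_typed_up; eauto.
  - apply d_mi; [eapply subst_typed_no_linear|]; eauto.
  - apply d_mc; [eapply subst_typed_no_linear|]; eauto.
    left; exists G, s, F, M; auto.
Qed.

Lemma derivable_subst0 k G G1 G2 M N :
  env_split G G1 G2 -> (k = KL \/ no_linear G2) ->
  derivable (ext k G1) M -> derivable G2 N -> derivable G (subst0 N M).
Proof.
  intros Hs Hk HM HN. apply (derivable_subst (ext k G1) G _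
    (fun y => match y with 0 => G2 | S y' => single y' (G1 y') end)); auto.
  split.
  - intros [|y] k0 Hy; simpl in *; auto. rewrite Hy. apply derivable_single.
  - intros [|y] k0 z k' Hy Hz; simpl in *.
    + exact (env_split_incl_r _ _ _ Hs _ _ Hz).
    + apply single_some in Hz as [-> Hz]. exact (env_split_incl_l _ _ _ Hs _ _ Hz).
  - intros [|y] k0 Hy Hk0 z Hz; simpl in *.
    + destruct Hk as [->|Hn]; [congruence | exact (Hn z Hz)].
    + apply single_some in Hz as [-> Hz]. congruence.
  - intros z Hz. destruct (env_split_linear _ _ _ _ Hs Hz) as [H1|H2].
    + exists (S z); simpl; rewrite single_at; auto.
    + exists 0; simpl; split; auto.
      destruct Hk as [->|Hn]; [auto | exfalso; exact (Hn z H2)].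
  - intros [|y] [|y'] z Hy Hy' Hz Hz'; simpl in *; auto.
    + apply single_some in Hz' as [-> Hz']. exfalso; eapply env_split_linear_excl; eauto.
    + apply single_some in Hz as [-> Hz]. exfalso; eapply env_split_linear_excl; eauto.
    + apply single_some in Hz as [-> _]. apply single_some in Hz' as [-> _]. auto.
Qed.

Lemma derivable_basic_red G M N : basic_red M N -> derivable G M -> derivable G N.
Proof.
  intros Hred HM. apply derivable_unfold in HM.
  destruct Hred as [M N|M N|M N]; inversion HM as [| | |? G1 G2 ? ? Hs HL HN| | | | |];
    subst; inversion HL; subst.
  - apply (derivable_subst0 KL G G1 G2); auto using derivable_fold.
  - inversion HN; subst. apply (derivable_subst0 KI G G1 G2); auto using derivable_fold.
  - inversion HN; subst. apply (derivable_subst0 KC G G1 G2); auto using derivable_fold.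
Qed.

Lemma derivable_ctx_red G M N : ctx_red M N -> derivable G M -> derivable G N.
Proof.
  intros Hred; revert G; induction Hred; intros G HM.
  1: eapply derivable_basic_red; eauto.
  all: apply derivable_unfold in HM; inversion HM; subst; apply derivable_fold.
  all: econstructor; eauto using derivable_fold, derivable_unfold.
Qed.

Theorem mainTheorem4 (G : env) (M N : term) :
  finite_env G -> derivable G M -> red M N -> derivable G N.
Proof.
  intros _ HM [N' [Hred Hbisim]].
  eapply derivable_bisim; [eapply derivable_ctx_red|]; eauto.
Qed.
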